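(* Let $G=(V,E)$ be a $d$-regular undirected graph on $n=|V|$ vertices with $0<d<n$, where $E\subseteq V\times V$ is viewed as a symmetric set of ordered pairs (so $|E|=dn$). Let $g,h\colon V\to V$ be arbitrary functions and let $f=(g,h)\colon V\times V\to V\times V$ be given by $f(u,v)=(g(u),h(v))$. Let $$T=\Pr_{b\xleftarrow{u}\{0,1\}}\big(\mathrm{dec}_G(f(\mathrm{enc}_G(b)))=1-b\big),$$ where the probability is over the uniform choice of $b$ and the randomness of $\mathrm{enc}_G$. Then $$T=\frac12+\frac{1}{2d(n-d)}\sum_{(v,u)\in E}\left(\frac{d\,|g^{-1}(v)|\cdot|h^{-1}(u)|}{n}-\big|E\big(g^{-1}(v),h^{-1}(u)\big)\big|\right).$$
   Context: For subsets $S,T\subseteq V$, $E(S,T)=\{(v,u)\in S\times T : (v,u)\in E\}$ (directed edges from $S$ to $T$). The graph code $(\mathrm{enc}_G,\mathrm{dec}_G)$ of $G$ consists of a randomized map $\mathrm{enc}_G\colon\{0,1\}\to V\times V$ and a deterministic map $\mathrm{dec}_G\colon V\times V\to\{0,1\}$: $\mathrm{enc}_G(0)$ is a uniformly random pair $(u,v)\in (V\times V)\setminus E$, $\mathrm{enc}_G(1)$ is a uniformly random pair $(u,v)\in E$, and $\mathrm{dec}_G(v_1,v_2)=1$ if $(v_1,v_2)\in E$ and $0$ otherwise. *)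

From mathcomp Require Import all_boot all_order all_algebra.
Set Implicit Arguments. Unset Strict Implicit. Unset Printing Implicit Defensive.
Import Order.TTheory GRing.Theory Num.Theory.
Local Open Scope ring_scope.

Definition edges (V : finType) (e : rel V) : {set V * V} :=
  [set p : V * V | e p.1 p.2].

Definition undirected (V : finType) (e : rel V) : Prop := symmetric e.

Definition regular (V : finType) (e : rel V) (d : nat) : Prop :=
  forall v : V, #|[set u | e v u]| = d.

Definition edges_between (V : finType) (e : rel V) (S T : {set V})
  : {set V * V} := [set p in edges e | (p.1 \in S) && (p.2 \in T)].

Definition dec (V : finType) (e : rel V) (p : V * V) : bool := e p.1 p.2.

(* Output distribution of enc_G b: uniform over (V x V) \ E for b = 0,
   uniform over E for b = 1.  enc_prob e b p = Pr[enc_G(b) = p]. *)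
Definition enc_support (V : finType) (e : rel V) (b : bool) : {set V * V} :=
  if b then edges e else ~: edges e.

Definition enc_prob (V : finType) (e : rel V) (b : bool) (p : V * V) : rat :=
  if p \in enc_support e b then (#|enc_support e b|%:R)^-1 else 0.

Definition pairf (V : finType) (g h : V -> V) (p : V * V) : V * V :=
  (g p.1, h p.2).

Definition flip_prob (V : finType) (e : rel V) (g h : V -> V) : rat :=
  \sum_(b : bool) (1 / 2) *
    \sum_(p : V * V | dec e (pairf g h p) == ~~ b) enc_prob e b p.

From mathcomp Require Import all_boot all_order all_algebra.
From mathcomp Require Import ring.
Set Implicit Arguments. Unset Strict Implicit. Unset Printing Implicit Defensive.
Import Order.TTheory GRing.Theory Num.Theory.
Local Open Scope ring_scope.

(* Write F = (g, h), x = |E ∩ F^-1(E)| and y = |E^c ∩ F^-1(E)|.  Since enc_G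
   is uniform on E and on its complement, T = ((|E| - x)/|E| + y/|E^c|) / 2,
   where |E| = dn and |E^c| = n(n - d) by regularity.  Splitting F^-1(E) into the fibres of F over the edges (v, u) gives
   x = Σ |E(g^-1(v), h^-1(u))| and x + y = |F^-1(E)| = Σ |g^-1(v)| |h^-1(u)|,
   and the formula becomes a rational identity in d, n, x and y. *)

Lemma sum_if_in_const (R : pzSemiRingType) (T : finType) (P : pred T)
    (A : {set T}) (c : R) :
  \sum_(p | P p) (if p \in A then c else 0) = #|[set p in A | P p]|%:R * c.
Proof.
rewrite -big_mkcondr /= (eq_bigl (mem [set p in A | P p])) => [|p].
  by rewrite sumr_const mulr_natl.
by rewrite !inE andbC.
Qed.

Lemma card_preimset_partition (T U : finType) (f : T -> U)
    (A : {set T}) (B : {set U}) :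
  #|A :&: f @^-1: B| = (\sum_(q in B) #|A :&: f @^-1: [set q]|)%N.
Proof.
rewrite -sum1_card (partition_big f (mem B)) => [|p]; last by rewrite !inE => /andP[].
apply: eq_bigr => q qB; rewrite -sum1_card; apply: eq_bigl => p.
rewrite !inE -andbA; case: (f p =P q) => [->|_]; last by rewrite !andbF.
by rewrite (qB : q \in B).
Qed.

Lemma preimset_pairf1 (V : finType) (g h : V -> V) (q : V * V) :
  pairf g h @^-1: [set q] = setX (g @^-1: [set q.1]) (h @^-1: [set q.2]).
Proof. by case: q => c c'; apply/setP => -[a b]; rewrite !inE /pairf xpair_eqE. Qed.

Lemma edges_betweenE (V : finType) (e : rel V) (S T : {set V}) :
  edges_between e S T = edges e :&: setX S T.
Proof. by apply/setP => p; rewrite !inE. Qed.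

Lemma sum_card_fibres_pairf (V : finType) (g h : V -> V) (B : {set V * V}) :
  (\sum_(q in B) #|g @^-1: [set q.1]| * #|h @^-1: [set q.2]|)%N =
    #|pairf g h @^-1: B|.
Proof.
rewrite -(setTI (_ @^-1: B)) card_preimset_partition; apply: eq_bigr => q _.
by rewrite setTI preimset_pairf1 cardsX.
Qed.

Lemma sum_card_edges_between_fibres (V : finType) (e : rel V) (g h : V -> V)
    (B : {set V * V}) :
  (\sum_(q in B) #|edges_between e (g @^-1: [set q.1]) (h @^-1: [set q.2])|)%N =
    #|edges e :&: pairf g h @^-1: B|.
Proof.
rewrite card_preimset_partition; apply: eq_bigr => q _.
by rewrite preimset_pairf1 edges_betweenE.
Qed.

Lemma card_edges (V : finType) (e : rel V) (d : nat) :
  regular e d -> #|edges e| = (d * #|V|)%N.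
Proof.
move=> reg; rewrite -sum1_card.
rewrite (eq_bigl (fun p : V * V => predT p.1 && e p.1 p.2)) => [|p]; last by rewrite inE.
rewrite -(pair_big_dep predT e (fun _ _ => 1%N)) /= (eq_bigr (fun=> d)) => [|v _].
  by rewrite sum_nat_const mulnC.
by rewrite -(reg v) -sum1_card; apply: eq_bigl => u; rewrite inE.
Qed.

Lemma card_edgesC (R : comPzRingType) (V : finType) (e : rel V) (d : nat) :
  regular e d -> #|~: edges e|%:R = #|V|%:R * (#|V|%:R - d%:R) :> R.
Proof.
move=> /card_edges cardE.
have := congr1 (GRing.natmul (1 : R)) (cardsC (edges e)).
rewrite card_prod cardE !natrD !natrM => partition_sq.
by rewrite mulrBr -partition_sq; ring.
Qed.

Lemma flip_probE (V : finType) (e : rel V) (g h : V -> V) :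
  let E := edges e in let F := pairf g h in
  flip_prob e g h =
    2^-1 * (#|E :\: F @^-1: E|%:R / #|E|%:R
            + #|~: E :&: F @^-1: E|%:R / #|~: E|%:R).
Proof.
rewrite /flip_prob big_bool /= /enc_prob /enc_support !sum_if_in_const.
rewrite -mulrDr div1r; congr (_ * (_ + _)); congr (_%:R / _); apply: eq_card => p.
  by rewrite !inE /dec eqbF_neg andbC.
by rewrite !inE /dec eqb_id.
Qed.

Lemma flip_prob_field_identity (K : numFieldType) (n d x y : K) :
  n != 0 -> d != 0 -> n - d != 0 ->
  2^-1 * ((d * n - x) / (d * n) + y / (n * (n - d))) =
    1 / 2 + (2 * d * (n - d))^-1 * (d * (x + y) / n - x).
Proof.
by move=> n0 d0 nd0; field; rewrite n0 nd0 d0.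
Qed.

Theorem proposition3p2 (V : finType) (e : rel V) (d : nat)
  (g h : V -> V) :
  undirected e -> regular e d -> (0 < d)%N -> (d < #|V|)%N ->
  flip_prob e g h =
    1 / 2 + (2 * d%:R * (#|V|%:R - d%:R))^-1 *
      \sum_(p in edges e)
        (d%:R * #|g @^-1: [set p.1]|%:R * #|h @^-1: [set p.2]|%:R / #|V|%:R
         - #|edges_between e (g @^-1: [set p.1]) (h @^-1: [set p.2])|%:R
         : rat).
Proof.
move=> _ reg d_gt0 d_lt_n; set E := edges e; set F := pairf g h.
set x := #|E :&: F @^-1: E|; set y := #|~: E :&: F @^-1: E|.
have card_preimE : #|F @^-1: E| = (x + y)%N.
  by rewrite -(cardsID E) setDE setIC [_ :&: ~: E]setIC.
have card_Ediff : #|E :\: F @^-1: E| = (#|E| - x)%N.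
  by rewrite -(cardsID (F @^-1: E) E) addKn.
have x_le_E : (x <= #|E|)%N by rewrite subset_leq_card ?subsetIl.
rewrite sumrB -natr_sum sum_card_edges_between_fibres.
rewrite -mulr_suml; under eq_bigr do rewrite -mulrA -natrM.
rewrite -mulr_sumr -natr_sum sum_card_fibres_pairf card_preimE.
rewrite flip_probE card_Ediff natrB // (card_edgesC _ reg) (card_edges reg).
rewrite natrD natrM flip_prob_field_identity //.
- by rewrite pnatr_eq0 -lt0n (ltn_trans d_gt0).
- by rewrite pnatr_eq0 -lt0n.
- by rewrite subr_eq0 eqr_nat gtn_eqF.
Qed.
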